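(* Let $M=P+\varepsilon D\in\mathbb{DH}[t]$ be monic with $\operatorname{mrpf}(P)=1$, and suppose $M$ admits a factorization $M=(t-h_1)\cdots(t-h_k)$ with $h_i\in\mathbb{DH}$. Write $P\overline{P}=\prod_{i=1}^m N_i^{n_i}$ with pairwise coprime irreducible monic $N_i\in\mathbb{R}[t]$. Then for every $x_0\in\mathbb{R}$ and every $x=x_1\mathbf{i}+x_2\mathbf{j}+x_3\mathbf{k}$ with $x_1,x_2,x_3\in\mathbb{R}$, setting $X=Px\overline{P}+x_0(P\overline{D}-D\overline{P})\in\mathbb{H}[t]$, for every $i$ with $n_i>1$ the polynomial $N_i^{n_i}$ divides the real polynomial $X\overline{X}$. (Geometrically: every intersection point of multiplicity $\mu>1$ of a trajectory $t\mapsto x_0P\overline{P}+\varepsilon X$ of the motion parametrized by $M$ with the plane at infinity lies on the absolute circle with multiplicity $\mu$.)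
   Context: $\mathbb{D}=\mathbb{R}[\varepsilon]/\langle\varepsilon^2\rangle$ denotes the dual numbers. $\mathbb{H}$ denotes the real quaternions with basis $1,\mathbf{i},\mathbf{j},\mathbf{k}$, $\mathbf{i}^2=\mathbf{j}^2=\mathbf{k}^2=\mathbf{i}\mathbf{j}\mathbf{k}=-1$. The dual quaternions $\mathbb{DH}$ are $\mathbb{H}\otimes_{\mathbb{R}}\mathbb{D}$ ($\varepsilon$ central). Conjugation: $\overline{q_0+q_1\mathbf{i}+q_2\mathbf{j}+q_3\mathbf{k}}=q_0-q_1\mathbf{i}-q_2\mathbf{j}-q_3\mathbf{k}$; for polynomials $\overline{\sum m_it^i}=\sum\overline{m_i}t^i$, and $Q\overline{Q}$ is real-valued for $Q\in\mathbb{H}[t]$. $\mathbb{DH}[t]$ is the polynomial ring with $t$ commuting with all coefficients; $M=P+\varepsilon D$ with $P,D\in\mathbb{H}[t]$ is the decomposition into primal and dual part. $\operatorname{mrpf}(P)=1$ means $P$ has no factor $c\in\mathbb{R}[t]$ of positive degree. The trajectory of the point $x_0+\varepsilon x$ of projective 3-space under $M$ is $(P-\varepsilon D)(x_0+\varepsilon x)(\overline{P}+\varepsilon\overline{D})=x_0P\overline{P}+\varepsilon X$; its points at infinity correspond to zeros of $x_0P\overline{P}$, and the absolute circle is given by $x_0=0$, $\overline{X}X=0$. *)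

From HB Require Import structures.
From mathcomp Require Import all_boot all_order all_algebra.
Set Implicit Arguments. Unset Strict Implicit. Unset Printing Implicit Defensive.
Import Order.TTheory GRing.Theory Num.Theory.
Local Open Scope ring_scope.

(* With A = R we get H; with A = {poly R} we get
   H[t] = H (x)_R R[t] (t central), the coefficients of t^n being the
   quaternions formed by the n-th coefficients of the four components. *)
Record quat (A : Type) := Quat { q0 : A; q1 : A; q2 : A; q3 : A }.
Arguments Quat {A}.

Section QuatOps.
Variable A : comNzRingType.
Implicit Types a b : quat A.

Definition qadd a b := Quat (q0 a + q0 b) (q1 a + q1 b) (q2 a + q2 b) (q3 a + q3 b).
Definition qopp a := Quat (- q0 a) (- q1 a) (- q2 a) (- q3 a).
Definition qsub a b := qadd a (qopp b).
(* Hamilton product: i^2 = j^2 = k^2 = ijk = -1 *)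
Definition qmul a b := Quat
  (q0 a * q0 b - q1 a * q1 b - q2 a * q2 b - q3 a * q3 b)
  (q0 a * q1 b + q1 a * q0 b + q2 a * q3 b - q3 a * q2 b)
  (q0 a * q2 b - q1 a * q3 b + q2 a * q0 b + q3 a * q1 b)
  (q0 a * q3 b + q1 a * q2 b - q2 a * q1 b + q3 a * q0 b).
Definition qconj a := Quat (q0 a) (- q1 a) (- q2 a) (- q3 a).
Definition qscale (c : A) a := Quat (c * q0 a) (c * q1 a) (c * q2 a) (c * q3 a).
Definition qzero : quat A := Quat 0 0 0 0.
Definition qone : quat A := Quat 1 0 0 0.
End QuatOps.

Definition qmap (A B : Type) (f : A -> B) (a : quat A) :=
  Quat (f (q0 a)) (f (q1 a)) (f (q2 a)) (f (q3 a)).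

(* Dual numbers over quaternions: prim + eps * dual, eps^2 = 0, eps central. *)
Record dquat (A : Type) := DQ { prim : quat A; dual : quat A }.
Arguments DQ {A}.

Section DQuatOps.
Variable A : comNzRingType.
Definition dqmul (m n : dquat A) : dquat A :=
  DQ (qmul (prim m) (prim n))
     (qadd (qmul (prim m) (dual n)) (qmul (dual m) (prim n))).
Definition dqone : dquat A := DQ (qone A) (qzero A).
End DQuatOps.

Section Poly.
Variable R : rcfType.

Notation qpoly := (quat {poly R}).

Definition qpolyC (h : quat R) : qpoly := qmap (fun c => c%:P) h.

Definition lin_factor (h : dquat R) : dquat {poly R} :=
  DQ (qsub (Quat 'X 0 0 0) (qpolyC (prim h))) (qopp (qpolyC (dual h))).

Definition lin_prod (hs : seq (dquat R)) : dquat {poly R} :=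
  foldr (fun h acc => dqmul (lin_factor h) acc) (dqone _) hs.

(* M = P + eps D monic: the leading coefficient (in DH) is 1, i.e. P has
   leading coefficient 1 (real part monic, other parts of lower degree)
   and D has lower degree than P. *)
Definition dq_monic (M : dquat {poly R}) : Prop :=
  let P := prim M in let D := dual M in
  [/\ q0 P \is monic,
      [/\ (size (q1 P) < size (q0 P))%N, (size (q2 P) < size (q0 P))%N
        & (size (q3 P) < size (q0 P))%N]
    & [/\ (size (q0 D) < size (q0 P))%N, (size (q1 D) < size (q0 P))%N,
          (size (q2 D) < size (q0 P))%N & (size (q3 D) < size (q0 P))%N]].

(* mrpf(P) = 1 : P has no real polynomial factor of positive degree *)
Definition mrpf_one (P : qpoly) : Prop :=
  ~ exists c : {poly R}, (1 < size c)%N /\ exists Q : qpoly, P = qscale c Q.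

(* Q * conj Q is real; this is its (only possibly nonzero) real part *)
Definition qnormp (Q : qpoly) : {poly R} := q0 (qmul Q (qconj Q)).

Definition traj_X (P D : qpoly) (x0 x1 x2 x3 : R) : qpoly :=
  qadd (qmul (qmul P (qpolyC (Quat 0 x1 x2 x3))) (qconj P))
       (qscale (x0%:P) (qsub (qmul P (qconj D)) (qmul D (qconj P)))).
End Poly.

From HB Require Import structures.
From mathcomp Require Import all_boot all_order all_algebra.
From mathcomp Require Import ring zify.
Import Order.TTheory GRing.Theory Num.Theory.
Local Open Scope ring_scope.

(* For a quaternion polynomial Q write |Q| := Q * conj Q (a
   real polynomial) and, for M = P + eps D, write S(M) := P Dbar + D Pbar
   (the real polynomial whose vanishing is the Study condition).
   1. |.| is multiplicative and S obeys a Leibniz rule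
      S(M1 M2) = S(M1) |P2| + |P1| S(M2)            (quaternion algebra).
   2. A direct computation gives |X| = |P| * K - x0^2 * S(M)^2 for some K.
   3. Each linear factor t - h has a norm of degree 2.  Hence, by induction
      on the number of factors and the Leibniz rule, an irreducible N of
      degree at least 2 with N^(e+1) | |P| satisfies N^e | S(M).
   4. mrpf(P) = 1 forbids real roots of |P| (a real root of a sum of four
      squares is a common root of the four components of P), so every
      monic irreducible factor N_i of |P| has degree at least 2.
   With n_i > 1, steps 3 and 2 give N_i^n_i | |P| K and
   N_i^(2 (n_i - 1)) | S(M)^2 with 2 (n_i - 1) >= n_i, hence N_i^n_i | |X|. *)

Definition qnorm {A : comNzRingType} (a : quat A) : A := q0 (qmul a (qconj a)).

Definition study {A : comNzRingType} (m : dquat A) : A :=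
  q0 (qadd (qmul (prim m) (qconj (dual m))) (qmul (dual m) (qconj (prim m)))).

Section QuaternionIdentities.
Variable A : comNzRingType.
Implicit Types a b x P D : quat A.

Lemma qnorm_mul a b : qnorm (qmul a b) = qnorm a * qnorm b.
Proof. by case: a => ????; case: b => ????; rewrite /qnorm /=; ring. Qed.

Lemma study_mul (m1 m2 : dquat A) :
  study (dqmul m1 m2) =
  study m1 * qnorm (prim m2) + qnorm (prim m1) * study m2.
Proof.
case: m1 => [[????] [????]]; case: m2 => [[????] [????]].
by rewrite /study /qnorm /=; ring.
Qed.

Lemma study_one : study (dqone A) = 0.
Proof. by rewrite /study /=; ring. Qed.

Lemma qnorm_Quat (a0 a1 a2 a3 : A) :
  qnorm (Quat a0 a1 a2 a3) = a0 * a0 + a1 * a1 + a2 * a2 + a3 * a3.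
Proof. by rewrite /qnorm /=; ring. Qed.

Lemma qnorm_trajectory (m : dquat A) x (x0 : A) : q0 x = 0 ->
  let P := prim m in let D := dual m in
  qnorm (qadd (qmul (qmul P x) (qconj P))
              (qscale x0 (qsub (qmul P (qconj D)) (qmul D (qconj P))))) =
  qnorm P * (qnorm P * qnorm x
             + 2 * x0 * (q0 (qmul (qmul x (qconj P)) D)
                         - q0 (qmul (qmul P x) (qconj D)))
             + 4 * x0 * x0 * qnorm D)
  - x0 * x0 * study m ^+ 2.
Proof.
case: m => [[????] [????]]; case: x => ? ???/= ->.
by rewrite /study /qnorm /=; ring.
Qed.

End QuaternionIdentities.

Lemma sqr_sum4_eq0 (R : realDomainType) (a b c d : R) :
  a * a + b * b + c * c + d * d = 0 -> [/\ a = 0, b = 0, c = 0 & d = 0].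
Proof.
have sq_ge0 (y : R) : 0 <= y * y by rewrite -expr2 sqr_ge0.
move=> /eqP; rewrite !paddr_eq0 ?addr_ge0 // -!expr2 !sqrf_eq0.
by case/andP=> /andP[/andP[/eqP-> /eqP->] /eqP->] /eqP->.
Qed.

Section PolynomialDivisibility.
Variable R : idomainType.
Implicit Types N c s G S q : {poly R}.

Lemma irreducible_dvd_or_coprime N q :
  irreducible_poly N -> N %| q \/ coprimep N q.
Proof.
move=> irrN; have [g1|gN] := irredp_XsubCP irrN (dvdp_gcdl N q).
  by right; rewrite coprimep_def size_poly_eq1.
by left; rewrite -(eqp_dvdl _ gN) dvdp_gcdr.
Qed.

(* The inductive step behind the Leibniz rule: multiplying by a factor c of
   degree at most deg N preserves "N^(e+1) | norm implies N^e | Study". *)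
Lemma leibniz_dvd_step N c s G S :
  irreducible_poly N -> c != 0 -> (size c <= size N)%N ->
  (forall e, N ^+ e.+1 %| G -> N ^+ e %| S) ->
  forall e, N ^+ e.+1 %| c * G -> N ^+ e %| s * G + c * S.
Proof.
move=> irrN c0 cN GS e.
have N0 : N != 0 := irredp_neq0 irrN.
have [Nc|copNc] := irreducible_dvd_or_coprime N c irrN.
- have eqNc : N %= c.
    by rewrite -dvdp_size_eqp // eqn_leq cN dvdp_leq.
  rewrite -(eqp_dvdr _ (eqp_mulr G eqNc)) exprSr [N * G]mulrC.
  rewrite dvdp_mul2r // => NeG.
  apply: dvdp_add; first exact: dvdp_mull.
  case: e NeG => [|e] NeG; first by rewrite expr0 dvd1p.
  by rewrite exprS; apply: dvdp_mul Nc (GS _ NeG).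
- rewrite Gauss_dvdpr ?coprimep_expl // => NeG.
  apply: dvdp_add; apply: dvdp_mull; last exact: GS.
  by apply: dvdp_trans NeG; rewrite dvdp_exp2l.
Qed.

End PolynomialDivisibility.

Section LinearFactors.
Variable R : rcfType.

Lemma qnormpE (P : quat {poly R}) : qnormp P = qnorm P.
Proof. by []. Qed.

(* |t - h| = (t - h0)^2 + h1^2 + h2^2 + h3^2 has degree exactly 2. *)
Lemma size_qnorm_lin_factor (h : dquat R) :
  size (qnorm (prim (lin_factor h))) = 3%N.
Proof.
case: h => [[a b c d] hd].
have -> : qnorm (prim (lin_factor (DQ (Quat a b c d) hd))) =
          ('X - a%:P) ^+ 2 + (b ^+ 2 + c ^+ 2 + d ^+ 2)%:P.
  by rewrite /qnorm /lin_factor /qpolyC /qmap /= !polyCD !polyC_exp; ring.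
by rewrite size_polyDl size_exp_XsubC // (leq_ltn_trans (size_polyC_leq1 _)).
Qed.

Lemma lin_prod_study_dvd (N : {poly R}) (hs : seq (dquat R)) :
  irreducible_poly N -> (2 < size N)%N ->
  forall e, N ^+ e.+1 %| qnorm (prim (lin_prod hs)) ->
            N ^+ e %| study (lin_prod hs).
Proof.
move=> irrN sN; elim: hs => [|h hs IH] e /=.
  by rewrite study_one dvdp0.
rewrite qnorm_mul study_mul; apply: leibniz_dvd_step => //.
  by rewrite -size_poly_gt0 size_qnorm_lin_factor.
by rewrite size_qnorm_lin_factor.
Qed.

Lemma mrpf_qnorm_no_root (P : quat {poly R}) (r : R) :
  mrpf_one P -> ~~ root (qnormp P) r.
Proof.
case: P => a b c d mrP; apply/negP.
rewrite qnormpE qnorm_Quat rootE !hornerE => /eqP /sqr_sum4_eq0[].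
move=> /eqP ha /eqP hb /eqP hc /eqP hd.
move: ha hb hc hd; rewrite -!/(root _ _) !root_factor_theorem.
move=> /dvdpP[qa ea] /dvdpP[qb eb] /dvdpP[qc ec] /dvdpP[qd ed].
apply: mrP; exists ('X - r%:P); split; first by rewrite size_XsubC.
by exists (Quat qa qb qc qd); rewrite /qscale ea eb ec ed !(mulrC ('X - r%:P)).
Qed.

Lemma mrpf_qnorm_factor_size (P : quat {poly R}) (N : {poly R}) :
  mrpf_one P -> N \is monic -> irreducible_poly N -> N %| qnormp P ->
  (2 < size N)%N.
Proof.
move=> mrP monN irrN NP; rewrite ltn_neqAle irrN.1 andbT.
apply/eqP => /esym sN2; case/negP: (mrpf_qnorm_no_root P (- N`_0) mrP).
have N1 : N`_1 = 1 by move: (monicP monN); rewrite /lead_coef sN2.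
have NN0 : root N (- N`_0).
  by rewrite rootE horner_coef sN2 !big_ord_recl big_ord0 /= N1; apply/eqP; ring.
by case/dvdpP: NP => q ->; rewrite rootM NN0 orbT.
Qed.

End LinearFactors.

Theorem theorem2 (R : rcfType) (M : dquat {poly R}) (hs : seq (dquat R))
  (m : nat) (N : 'I_m -> {poly R}) (n : 'I_m -> nat) :
  dq_monic M ->
  mrpf_one (prim M) ->
  M = lin_prod hs ->
  (forall i, N i \is monic) ->
  (forall i, irreducible_poly (N i)) ->
  (forall i j, i != j -> coprimep (N i) (N j)) ->
  qnormp (prim M) = \prod_(i < m) N i ^+ n i ->
  forall (x0 x1 x2 x3 : R) (i : 'I_m), (1 < n i)%N ->
    N i ^+ n i %| qnormp (traj_X (prim M) (dual M) x0 x1 x2 x3).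
Proof.
move=> _ mrP defM monN irrN _ normP x0 x1 x2 x3 i n_gt1.
have NP : N i ^+ n i %| qnormp (prim M).
  by rewrite normP (bigD1 i) //= dvdp_mulr.
have sN : (2 < size (N i))%N.
  apply: mrpf_qnorm_factor_size mrP (monN i) (irrN i) _.
  by apply: dvdp_trans NP; rewrite -{1}(expr1 (N i)) dvdp_exp2l 1?ltnW.
have NS : N i ^+ (n i).-1 %| study M.
  rewrite defM; apply: lin_prod_study_dvd => //.
  by rewrite prednK ?(ltnW n_gt1) // -defM.
(* |X| = |P| K - x0^2 S(M)^2 and n_i <= 2 (n_i - 1). *)
rewrite qnormpE qnorm_trajectory /=; last by rewrite polyC0.
apply: dvdp_sub; first exact: dvdp_mulr.
apply: dvdp_mull; apply: dvdp_trans (dvdp_exp2r 2 NS).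
by rewrite -exprM dvdp_exp2l //; move: n_gt1; lia.
Qed.
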